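(* Let $G$ be a connected multi-ended graph on $X$ and let $C$ be a cut. Let $a$ and $b$ be the numbers of finite and infinite connected components of the induced subgraph $G|_C$, respectively. Then $a+b\le|\delta C|$, and in fact $$a<|\delta C|\quad\text{and}\quad 1\le b\le\frac{|\delta C|-a}{k_0}.$$ In particular, every thin cut is connected, and hence every thin cut is neat.
   Context: A graph on $X$ is an irreflexive symmetric relation $G\subseteq X^2$. For $A\subseteq X$, $\delta A$ is the set of edges with one endpoint in $A$ and the other in $X\setminus A$. A cut is a set $A\subseteq X$ with $A$ and $X\setminus A$ infinite and $\delta A$ finite; $G$ is multi-ended if it has a cut. $k_0:=\min\{|\delta A|: A$ a cut$\}$, and a cut $A$ is thin if $|\delta A|=k_0$. A set $A$ is connected if the induced subgraph $G|_A$ is connected; a cut $A$ is neat if both $A$ and $X\setminus A$ are connected. *)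

From Stdlib Require Import List Arith Lia.
Import ListNotations.
Set Implicit Arguments.

Section Graphs.
Variable X : Type.

Definition is_graph (G : X -> X -> Prop) : Prop :=
  (forall x, ~ G x x) /\ (forall x y, G x y -> G y x).

Definition has_card {T : Type} (P : T -> Prop) (n : nat) : Prop :=
  exists l : list T, NoDup l /\ (forall t, P t <-> In t l) /\ length l = n.

Definition finite_set {T : Type} (P : T -> Prop) : Prop := exists n, has_card P n.
Definition infinite_set {T : Type} (P : T -> Prop) : Prop := ~ finite_set P.

Definition compl (A : X -> Prop) : X -> Prop := fun x => ~ A x.

(* delta A: edges with one endpoint in A and the other outside A; each such
   edge {x,y} is represented by the unique ordered pair (x,y) with x in A. *)
Definition boundary (G : X -> X -> Prop) (A : X -> Prop) : X * X -> Prop :=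
  fun p => G (fst p) (snd p) /\ A (fst p) /\ ~ A (snd p).

(* x and y are joined by a path of G all of whose vertices lie in A
   (i.e. connected in the induced subgraph G|_A). *)
Inductive conn_in (G : X -> X -> Prop) (A : X -> Prop) (x : X) : X -> Prop :=
| conn_refl : A x -> conn_in G A x x
| conn_step : forall y z, conn_in G A x y -> G y z -> A z -> conn_in G A x z.

Definition connected_graph (G : X -> X -> Prop) : Prop :=
  forall x y, conn_in G (fun _ => True) x y.

Definition connected_set (G : X -> X -> Prop) (A : X -> Prop) : Prop :=
  forall x y, A x -> A y -> conn_in G A x y.

Definition is_cut (G : X -> X -> Prop) (A : X -> Prop) : Prop :=
  infinite_set A /\ infinite_set (compl A) /\ finite_set (boundary G A).

Definition multi_ended (G : X -> X -> Prop) : Prop := exists A, is_cut G A.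

Definition is_k0 (G : X -> X -> Prop) (k : nat) : Prop :=
  (exists A, is_cut G A /\ has_card (boundary G A) k) /\
  (forall A m, is_cut G A -> has_card (boundary G A) m -> k <= m).

Definition thin (G : X -> X -> Prop) (A : X -> Prop) : Prop :=
  is_cut G A /\ exists k, is_k0 G k /\ has_card (boundary G A) k.

Definition neat (G : X -> X -> Prop) (A : X -> Prop) : Prop :=
  is_cut G A /\ connected_set G A /\ connected_set G (compl A).

(* r is a list of representatives, one for each connected component of G|_C. *)
Definition component_reps (G : X -> X -> Prop) (C : X -> Prop) (r : list X) : Prop :=
  (forall x, In x r -> C x) /\
  (forall i j d, i < length r -> j < length r -> i <> j ->
     ~ conn_in G C (nth i r d) (nth j r d)) /\
  (forall x, C x -> exists y, In y r /\ conn_in G C y x).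

End Graphs.

From Stdlib Require Import List Arith Lia Classical ClassicalEpsilon FinFun.
Import ListNotations.

(* Every component D of G|_C contains the C-endpoint of some edge of δC, and
   δD is exactly the set of those edges of δC whose C-endpoint lies in D; so
   the sets δD partition δC and there are finitely many components.  Since G is
   connected, δD is nonempty; if D is infinite it is a cut (its complement
   contains the infinite set X∖C), so |δD| ≥ k0.  Summing, a + b k0 ≤ |δC|,
   and b ≥ 1 because C is infinite.  For a thin cut (|δC| = k0) this forces
   a = 0 and b = 1; as the complement of a thin cut is thin, thin cuts are neat. *)

Definition pdec (P : Prop) : bool :=
  if excluded_middle_informative P then true else false.

Lemma pdec_spec (P : Prop) : pdec P = true <-> P.
Proof.
  unfold pdec; destruct (excluded_middle_informative P); split; auto; discriminate.
Qed.

Section FiniteSets.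
Context {T : Type}.

Lemma finite_set_of_list (l : list T) : forall P : T -> Prop,
  (forall t, P t -> In t l) -> finite_set P.
Proof.
  induction l as [|a l IH]; intros P Hl.
  - exists 0, []; repeat split; [constructor | intros Ht; exact (Hl t Ht) | intros []].
  - destruct (IH (fun t => P t /\ t <> a)) as [n [l0 [Hnd [Hl0 Hlen]]]].
    { intros t [Ht Hne]; destruct (Hl t Ht); [congruence | auto]. }
    destruct (classic (P a)) as [Pa|nPa].
    + exists (S n), (a :: l0); repeat split.
      * constructor; auto. intros H; apply Hl0 in H; tauto.
      * intros Ht; destruct (classic (t = a)); [left; auto | right; apply Hl0; auto].
      * intros [<-|H]; [auto | apply Hl0 in H; tauto].
      * simpl; lia.
    + exists n, l0; repeat split; auto.
      * intros Ht; apply Hl0; split; congruence.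
      * intros H; apply Hl0 in H; tauto.
Qed.

Lemma finite_set_incl (P Q : T -> Prop) :
  finite_set Q -> (forall t, P t -> Q t) -> finite_set P.
Proof.
  intros [n [l [_ [Hl _]]]] H; apply (finite_set_of_list l); intros t Ht; apply Hl; auto.
Qed.

Lemma infinite_set_inhabited (P : T -> Prop) : infinite_set P -> exists t, P t.
Proof.
  intros H; apply NNPP; intros Hn; apply H, (finite_set_of_list []).
  intros t Ht; apply Hn; eauto.
Qed.

Lemma has_card_le_length (P : T -> Prop) n l :
  has_card P n -> (forall t, P t -> In t l) -> n <= length l.
Proof.
  intros [l0 [Hnd [Hl0 <-]]] H; apply NoDup_incl_length; auto.
  intros t Ht; apply H, Hl0; auto.
Qed.

Lemma finite_set_union {I : Type} (Q : I -> T -> Prop) (R : list I) : forall P : T -> Prop,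
  (forall i, In i R -> finite_set (Q i)) ->
  (forall t, P t -> exists i, In i R /\ Q i t) -> finite_set P.
Proof.
  induction R as [|i R IH]; intros P Hfin Hcov.
  - apply (finite_set_of_list []); intros t Ht; destruct (Hcov t Ht) as [? [[] _]].
  - destruct (Hfin i (or_introl eq_refl)) as [n [li [_ [Hli _]]]].
    destruct (IH (fun t => P t /\ ~ Q i t)) as [m [lr [_ [Hlr _]]]].
    + intros j Hj; apply Hfin; right; auto.
    + intros t [Ht Hn]; destruct (Hcov t Ht) as [j [[<-|Hj] Hq]]; [contradiction | eauto].
    + apply (finite_set_of_list (li ++ lr)); intros t Ht; apply in_or_app.
      destruct (classic (Q i t)); [left; apply Hli | right; apply Hlr]; auto.
Qed.

End FiniteSets.

Lemma list_sum_map_ge {A : Type} (g : A -> nat) c l :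
  (forall a, In a l -> c <= g a) -> c * length l <= list_sum (map g l).
Proof.
  induction l as [|a l IH]; simpl; intros H; [lia|].
  specialize (IH (fun b Hb => H b (or_intror Hb))); specialize (H a (or_introl eq_refl)); nia.
Qed.

Lemma list_sum_filter_length_le {A B : Type} (f : A -> B -> bool) (R : list A) (L : list B) :
  (forall b, length (filter (fun a => f a b) R) <= 1) ->
  list_sum (map (fun a => length (filter (f a) L)) R) <= length L.
Proof.
  intros H; induction L as [|b L IH].
  - clear H; induction R; simpl in *; lia.
  - assert (Hsplit : list_sum (map (fun a => length (filter (f a) (b :: L))) R) =
      length (filter (fun a => f a b) R) + list_sum (map (fun a => length (filter (f a) L)) R)).
    { clear; induction R as [|a R IH]; simpl in *; auto; destruct (f a b); simpl; lia. }
    rewrite Hsplit; specialize (H b); simpl; lia.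
Qed.

Lemma ForallOrdPairs_nth {A : Type} (R : A -> A -> Prop) (l : list A) :
  (forall x y, R x y -> R y x) -> ForallOrdPairs R l ->
  forall i j d, i < length l -> j < length l -> i <> j -> R (nth i l d) (nth j l d).
Proof.
  intros Hsym H; induction H as [|a l Ha Hl IH]; intros i j d Hi Hj Hij; simpl in *; [lia|].
  rewrite Forall_forall in Ha.
  destruct i, j; [lia | apply Ha, nth_In; lia | apply Hsym, Ha, nth_In; lia | apply IH; lia].
Qed.

Section Representatives.
Context {T : Type} (R : T -> T -> Prop).

Fixpoint class_reps (l : list T) : list T :=
  match l with
  | [] => []
  | x :: l' =>
      if pdec (exists y, In y (class_reps l') /\ R x y) then class_reps l'
      else x :: class_reps l'
  end.

Lemma class_reps_cover l : (forall x, In x l -> R x x) ->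
  forall x, In x l -> exists y, In y (class_reps l) /\ R x y.
Proof.
  induction l as [|a l IH]; intros Hrefl x Hx; [destruct Hx|]; simpl.
  destruct (pdec _) eqn:E; destruct Hx as [<-|Hx].
  - apply pdec_spec; exact E.
  - apply IH; auto; intros y Hy; apply Hrefl; right; auto.
  - exists a; split; [left | apply Hrefl; left]; auto.
  - destruct (IH (fun y Hy => Hrefl y (or_intror Hy)) x Hx) as [y [Hy Hxy]].
    exists y; split; [right|]; auto.
Qed.

Lemma class_reps_pairwise l : ForallOrdPairs (fun a b => ~ R a b) (class_reps l).
Proof.
  induction l as [|a l IH]; simpl; [constructor|].
  destruct (pdec _) eqn:E; auto; constructor; auto.
  apply Forall_forall; intros y Hy Hay.
  assert (Hex : pdec (exists y, In y (class_reps l) /\ R a y) = true)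
    by (apply pdec_spec; eauto).
  congruence.
Qed.

Lemma class_reps_incl l : incl (class_reps l) l.
Proof.
  induction l as [|a l IH]; simpl; [apply incl_refl|].
  destruct (pdec _); [apply incl_tl | apply incl_cons; [left | apply incl_tl]]; auto.
Qed.

Lemma class_reps_app l1 l2 :
  exists l1', incl l1' l1 /\ class_reps (l1 ++ l2) = l1' ++ class_reps l2.
Proof.
  induction l1 as [|a l1 [l1' [Hincl Heq]]]; simpl.
  - exists []; split; [intros ? [] | reflexivity].
  - rewrite Heq; destruct (pdec _).
    + exists l1'; split; [apply incl_tl|]; auto.
    + exists (a :: l1'); split; [apply incl_cons; [left | apply incl_tl]|]; auto.
Qed.

End Representatives.

Section Connectivity.
Context {X : Type} (G : X -> X -> Prop).

Lemma conn_in_r A x y : conn_in G A x y -> A y.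
Proof. induction 1; auto. Qed.

Lemma conn_in_trans A x y z : conn_in G A x y -> conn_in G A y z -> conn_in G A x z.
Proof. intros Hxy Hyz; induction Hyz; auto; eapply conn_step; eauto. Qed.

Lemma boundary_component_incl A r p : boundary G (conn_in G A r) p -> boundary G A p.
Proof.
  destruct p as [u v]; intros [Huv [Hu Hv]]; simpl in *.
  repeat split; simpl; auto.
  - eapply conn_in_r; eauto.
  - intros Av; apply Hv; eapply conn_step; eauto.
Qed.

Hypothesis G_sym : forall x y, G x y -> G y x.

Lemma conn_in_sym A x y : conn_in G A x y -> conn_in G A y x.
Proof.
  induction 1 as [Hx|y z Hxy IH Hyz Hz]; [constructor; auto|].
  apply conn_in_trans with y; auto.
  eapply conn_step; [constructor; auto | apply G_sym; auto | eapply conn_in_r; eauto].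
Qed.

Lemma conn_in_exit A x y : connected_graph G -> A x -> ~ A y ->
  exists p, boundary G A p /\ conn_in G A x (fst p).
Proof.
  intros Hconn Hx Hy.
  assert (Hleave : conn_in G A x y \/ exists p, boundary G A p /\ conn_in G A x (fst p)).
  { clear Hy; induction (Hconn x y) as [_|u v _ IH Huv _]; [left; constructor; auto|].
    destruct IH as [Hxu|Hexit]; [|right; auto].
    destruct (classic (A v)); [left; eapply conn_step; eauto | right].
    exists (u, v); repeat split; simpl; auto; eapply conn_in_r; eauto. }
  destruct Hleave as [Hxy|]; [apply conn_in_r in Hxy; contradiction | auto].
Qed.

Lemma filter_conn_in_length_le_1 A R y :
  ForallOrdPairs (fun a b => ~ conn_in G A a b) R ->
  length (filter (fun r => pdec (conn_in G A r y)) R) <= 1.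
Proof.
  induction 1 as [|a l Ha Hl IH]; simpl; [lia|].
  destruct (pdec (conn_in G A a y)) eqn:Eay; [|auto].
  rewrite (filter_ext_in _ (fun _ => false)), filter_false; simpl; [lia|].
  intros b Hb; destruct (pdec (conn_in G A b y)) eqn:Eby; auto.
  rewrite Forall_forall in Ha; rewrite pdec_spec in Eay, Eby; exfalso; apply (Ha b Hb).
  apply conn_in_trans with y; auto; apply conn_in_sym; auto.
Qed.

Lemma cut_boundary_inhabited A : connected_graph G -> is_cut G A -> exists p, boundary G A p.
Proof.
  intros Hconn [HA [HcA _]].
  destruct (infinite_set_inhabited _ HA) as [x Hx].
  destruct (infinite_set_inhabited _ HcA) as [y Hy].
  destruct (conn_in_exit A x y Hconn Hx Hy) as [p [Hp _]]; eauto.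
Qed.

Lemma k0_pos k0 : connected_graph G -> is_k0 G k0 -> 1 <= k0.
Proof.
  intros Hconn [[A [HA Hcard]] _].
  destruct (cut_boundary_inhabited A Hconn HA) as [p Hp].
  destruct Hcard as [l [_ [Hl <-]]]; apply Hl in Hp; destruct l; simpl in *; [contradiction | lia].
Qed.

End Connectivity.

Section CutComponents.
Context {X : Type} (G : X -> X -> Prop) (C : X -> Prop) (L : list (X * X)).
Hypotheses (HG : is_graph G) (Hconn : connected_graph G) (HC : is_cut G C)
  (HL : forall p, boundary G C p <-> In p L).

Let G_sym : forall x y, G x y -> G y x := proj2 HG.

(* The edges of δC whose C-endpoint lies in the component of [r]; for [C r]
   this is δ of that component. *)
Definition attached (r : X) : list (X * X) :=
  filter (fun p => pdec (conn_in G C r (fst p))) L.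

Lemma component_meets_boundary x : C x -> exists p, In p L /\ conn_in G C x (fst p).
Proof.
  intros Hx; destruct HC as [_ [HcC _]].
  destruct (infinite_set_inhabited _ HcC) as [y Hy].
  destruct (conn_in_exit G C x y Hconn Hx Hy) as [p [Hp Hxp]].
  exists p; split; [apply HL|]; auto.
Qed.

Lemma attached_nonempty r : C r -> 1 <= length (attached r).
Proof.
  intros Hr; destruct (component_meets_boundary r Hr) as [p [Hp Hrp]].
  assert (Hin : In p (attached r)) by (apply filter_In; rewrite pdec_spec; auto).
  destruct (attached r); [destruct Hin | simpl; lia].
Qed.

Lemma infinite_component_is_cut r :
  infinite_set (conn_in G C r) -> is_cut G (conn_in G C r).
Proof.
  destruct HC as [_ [HcC HfinC]]; intros Hinf; repeat split; auto.
  - intros Hfin; apply HcC, (finite_set_incl _ _ Hfin).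
    intros t Ht Hrt; apply Ht; eapply conn_in_r; eauto.
  - apply (finite_set_incl _ _ HfinC), boundary_component_incl.
Qed.

Lemma attached_length_ge_k0 k0 r :
  is_k0 G k0 -> infinite_set (conn_in G C r) -> k0 <= length (attached r).
Proof.
  intros [_ Hmin] Hinf.
  pose proof (infinite_component_is_cut r Hinf) as Hcut.
  destruct (proj2 (proj2 Hcut)) as [m Hm].
  apply Nat.le_trans with m; [exact (Hmin _ m Hcut Hm)|].
  apply (has_card_le_length _ _ _ Hm); intros p Hp; apply filter_In; split.
  - apply HL, (boundary_component_incl G C r), Hp.
  - apply pdec_spec, Hp.
Qed.

Lemma attached_sum_le R : ForallOrdPairs (fun a b => ~ conn_in G C a b) R ->
  list_sum (map (fun r => length (attached r)) R) <= length L.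
Proof.
  intros Hpw; apply (list_sum_filter_length_le (fun r p => pdec (conn_in G C r (fst p)))).
  intros p; apply filter_conn_in_length_le_1; auto.
Qed.

Lemma component_reps_of_pairwise r :
  (forall x, In x r -> C x) -> ForallOrdPairs (fun a b => ~ conn_in G C a b) r ->
  (forall x, C x -> exists y, In y r /\ conn_in G C y x) -> component_reps G C r.
Proof.
  intros HrC Hpw Hcov; repeat split; auto.
  apply (ForallOrdPairs_nth (fun a b => ~ conn_in G C a b)); auto.
  intros a b Hab Hba; apply Hab, conn_in_sym; auto.
Qed.

Lemma component_reps_split : exists lfin linf,
  ForallOrdPairs (fun a b => ~ conn_in G C a b) (lfin ++ linf) /\
  component_reps G C (lfin ++ linf) /\
  Forall (fun x => finite_set (conn_in G C x)) lfin /\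
  Forall (fun x => infinite_set (conn_in G C x)) linf.
Proof.
  set (endpoints_with P := filter (fun x => pdec (P (conn_in G C x))) (map fst L)).
  set (R := conn_in G C).
  set (Efin := endpoints_with finite_set); set (Einf := endpoints_with infinite_set).
  destruct (class_reps_app R Efin Einf) as [lfin [Hincl Hsplit]].
  assert (Hendpoints :
    forall P x, In x (endpoints_with P) -> In x (map fst L) /\ P (conn_in G C x)).
  { intros P x Hx; apply filter_In in Hx; rewrite pdec_spec in Hx; exact Hx. }
  assert (Hendpoint_C : forall x, In x (map fst L) -> C x).
  { intros x Hx; apply in_map_iff in Hx; destruct Hx as [p [<- Hp]]; apply HL, Hp. }
  exists lfin, (class_reps R Einf); rewrite <- Hsplit.
  assert (Hpw := class_reps_pairwise R (Efin ++ Einf)).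
  split; [exact Hpw | split; [|split]].
  - apply component_reps_of_pairwise; auto.
    + intros x Hx; apply class_reps_incl, in_app_or in Hx.
      destruct Hx as [Hx|Hx]; apply Hendpoints in Hx; apply Hendpoint_C, Hx.
    + intros x Hx; destruct (component_meets_boundary x Hx) as [p [Hp Hxp]].
      destruct (class_reps_cover R (Efin ++ Einf)) with (x := fst p) as [y [Hy Hpy]].
      * intros z Hz; apply in_app_or in Hz.
        constructor; destruct Hz as [Hz|Hz]; apply Hendpoints in Hz; apply Hendpoint_C, Hz.
      * apply in_or_app; destruct (classic (finite_set (conn_in G C (fst p))));
          [left | right]; apply filter_In; rewrite pdec_spec; auto using in_map.
      * exists y; split; auto; apply (conn_in_sym G G_sym), conn_in_trans with (fst p); auto.
  - apply Forall_forall; intros x Hx; apply (Hendpoints _ x (Hincl x Hx)).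
  - apply Forall_forall; intros x Hx; apply (Hendpoints _ x (class_reps_incl R _ x Hx)).
Qed.

Lemma infinite_component_exists lfin linf :
  component_reps G C (lfin ++ linf) ->
  Forall (fun x => finite_set (conn_in G C x)) lfin -> 1 <= length linf.
Proof.
  intros [_ [_ Hcov]] Hfin; destruct linf; simpl; [exfalso | lia].
  apply (proj1 HC), (finite_set_union (conn_in G C) lfin).
  - apply Forall_forall, Hfin.
  - rewrite app_nil_r in Hcov; exact Hcov.
Qed.

Lemma cut_components_bound k0 : is_k0 G k0 -> exists lfin linf,
  component_reps G C (lfin ++ linf) /\
  Forall (fun x => finite_set (conn_in G C x)) lfin /\
  Forall (fun x => infinite_set (conn_in G C x)) linf /\
  length lfin + length linf * k0 <= length L /\ 1 <= length linf.
Proof.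
  intros Hk0; destruct component_reps_split as [lfin [linf [Hpw [Hreps [Hfin Hinf]]]]].
  exists lfin, linf; do 3 (split; [assumption|]).
  split; [|eapply infinite_component_exists; eauto].
  assert (Hfin_ge : 1 * length lfin <= list_sum (map (fun r => length (attached r)) lfin)).
  { apply list_sum_map_ge; intros r Hr; apply attached_nonempty, (proj1 Hreps), in_or_app; auto. }
  assert (Hinf_ge : k0 * length linf <= list_sum (map (fun r => length (attached r)) linf)).
  { rewrite Forall_forall in Hinf; apply list_sum_map_ge; intros r Hr.
    apply attached_length_ge_k0; auto. }
  pose proof (attached_sum_le _ Hpw) as Hsum; rewrite map_app, list_sum_app in Hsum; lia.
Qed.

End CutComponents.

Section ThinCuts.
Context {X : Type} (G : X -> X -> Prop).
Hypotheses (HG : is_graph G) (Hconn : connected_graph G).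

Lemma thin_connected A : thin G A -> connected_set G A.
Proof.
  intros [Hcut [k [Hk [L [_ [HL Hlen]]]]]].
  destruct (cut_components_bound G A L HG Hconn Hcut HL k Hk)
    as [lfin [linf [[_ [_ Hcov]] [_ [_ [Hle Hb]]]]]].
  pose proof (k0_pos G k Hconn Hk).
  destruct lfin as [|? lfin]; [|simpl in Hle; nia].
  destruct linf as [|r [|? linf]]; simpl in *; [lia | | nia].
  intros x y Hx Hy.
  destruct (Hcov x Hx) as [? [[<-|[]] Hrx]], (Hcov y Hy) as [? [[<-|[]] Hry]].
  apply conn_in_trans with r; auto; apply conn_in_sym; auto; apply HG.
Qed.

Lemma boundary_compl_has_card A n :
  has_card (boundary G A) n -> has_card (boundary G (compl A)) n.
Proof.
  intros [l [Hnd [Hl Hlen]]].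
  exists (map (fun p => (snd p, fst p)) l); split; [|split].
  - apply Injective_map_NoDup; auto; intros [a b] [c e] Heq; simpl in Heq; congruence.
  - intros [a b]; rewrite in_map_iff; split.
    + intros [Hab [Ha Hb]]; exists (b, a); split; auto; apply Hl; unfold compl in *.
      repeat split; simpl; [apply HG | apply NNPP |]; auto.
    + intros [[c e] [Heq Hce]]; injection Heq as <- <-.
      apply Hl in Hce; destruct Hce as [Hce [Hc He]].
      repeat split; simpl in *; [apply HG | |]; auto.
  - rewrite length_map; auto.
Qed.

Lemma thin_compl A : thin G A -> thin G (compl A).
Proof.
  intros [[HA [HcA _]] [k [Hk Hcard]]].
  pose proof (boundary_compl_has_card A k Hcard) as Hcard'.
  repeat split; [| | exists k | exists k]; auto.
  intros Hfin; apply HA, (finite_set_incl _ _ Hfin); intros t Ht Hnt; contradiction.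
Qed.

End ThinCuts.

Theorem mainTheorem14 (X : Type) (G : X -> X -> Prop)
  (HG : is_graph G) (Hconn : connected_graph G) (Hme : multi_ended G)
  (C : X -> Prop) (HC : is_cut G C) (d k0 : nat)
  (Hd : has_card (boundary G C) d) (Hk0 : is_k0 G k0) :
  (exists lfin linf : list X,
     component_reps G C (lfin ++ linf) /\
     Forall (fun x => finite_set (conn_in G C x)) lfin /\
     Forall (fun x => infinite_set (conn_in G C x)) linf /\
     length lfin + length linf <= d /\
     length lfin < d /\
     1 <= length linf /\
     length linf * k0 <= d - length lfin) /\
  (forall A, thin G A -> connected_set G A /\ neat G A).
Proof.
  split.
  - destruct Hd as [L [_ [HL <-]]].
    destruct (cut_components_bound G C L HG Hconn HC HL k0 Hk0)
      as [lfin [linf [Hreps [Hfin [Hinf [Hle Hb]]]]]].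
    pose proof (k0_pos G k0 Hconn Hk0).
    exists lfin, linf; do 3 (split; [assumption|]); repeat split; nia.
  - intros A Hthin.
    pose proof (thin_connected G HG Hconn A Hthin) as HA.
    pose proof (thin_connected G HG Hconn _ (thin_compl G HG A Hthin)) as HcA.
    repeat split; apply Hthin || auto.
Qed.
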